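(* Let $n\ge 3$, let $g:[1,\lfloor n/2\rfloor]\to\mathbb{R}$ be strictly decreasing and strictly convex, and let $A$ be a set of $m$ vertices of $C_n$. Then $A$ is a minimizer of $E_g$ (on $C_n$) if and only if $A$ is maximally even.
   Context: The cycle $C_n$ has vertex set $\{0,\dots,n-1\}$ with $i$ adjacent to $i+1\bmod n$, and $\lfloor n/2\rfloor$ is its diameter. For a finite simple connected graph $G$, $d(u,v)$ is the shortest-path distance, and for a set $A$ of vertices, $E_g(A)=\sum_{\{u,v\}\subseteq A,\,u\ne v} g(d(u,v))$ (sum over unordered pairs; $E_g(A)=0$ if $|A|\le1$). $A$ is a minimizer of a function $F$ on subsets of $V(G)$ if $F(A)=\min\{F(B): B\subseteq V(G), |B|=|A|\}$. The clockwise distance $d^*(u,v)$ is the least non-negative integer congruent to $v-u$ mod $n$. For $A=\{a_0<\dots<a_{m-1}\}$, $\mathrm{span}_A(a_i,a_j)$ is the least positive integer congruent to $j-i$ mod $m$, and $\sigma^*_k(A)$ is the multiset $[\,d^*(u,v): u,v\in A, u\neq v, \mathrm{span}_A(u,v)=k\,]$. $A$ is maximally even if for each $1\le k\le m-1$ the set of values of $\sigma^*_k(A)$ is a single integer or two consecutive integers. *)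

From mathcomp Require Import all_boot all_order all_algebra.
From mathcomp Require Import reals.
Set Implicit Arguments. Unset Strict Implicit. Unset Printing Implicit Defensive.
Import Order.TTheory GRing.Theory Num.Theory.

(* Vertices of the cycle C_n are 'I_n; i ~ i+1 mod n. *)

Definition cdist (n : nat) (u v : 'I_n) : nat := (v + (n - u)) %% n.

Definition cycdist (n : nat) (u v : 'I_n) : nat := minn (cdist u v) (cdist v u).

Local Open Scope ring_scope.

Definition energy (R : realType) (n : nat) (g : R -> R) (A : {set 'I_n}) : R :=
  \sum_(u in A) \sum_(v in A | (u < v)%N) g (cycdist u v)%:R.

Definition is_minimizer (R : realType) (n : nat) (g : R -> R) (A : {set 'I_n}) :=
  forall B : {set 'I_n}, #|B| = #|A| -> energy g A <= energy g B.

Local Close Scope ring_scope.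

(* index i of a = a_i in the increasing enumeration a_0 < ... < a_{m-1} of A *)
Definition rank_in (n : nat) (A : {set 'I_n}) (a : 'I_n) : nat :=
  #|[set b in A | (b < a)%N]|.

Definition span_in (n : nat) (A : {set 'I_n}) (u v : 'I_n) : nat :=
  let m := #|A| in
  let r := (rank_in A v + (m - rank_in A u)) %% m in
  if r == 0 then m else r.

Definition sigma_vals (n : nat) (A : {set 'I_n}) (k : nat) : pred nat :=
  fun d => [exists u in A, exists v in A,
             [&& u != v, span_in A u v == k & cdist u v == d]].

Definition maximally_even (n : nat) (A : {set 'I_n}) : Prop :=
  forall k, 1 <= k <= #|A| - 1 ->
    (exists c, forall d, sigma_vals A k d -> d = c)
    \/ (exists c, (forall d, sigma_vals A k d -> d = c \/ d = c.+1)
                  /\ sigma_vals A k c /\ sigma_vals A k c.+1).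

Local Open Scope ring_scope.

Definition in_itv (R : realType) (a b x : R) := a <= x <= b.

Definition strictly_decreasing_on (R : realType) (a b : R) (g : R -> R) :=
  forall x y, in_itv a b x -> in_itv a b y -> x < y -> g y < g x.

Definition strictly_convex_on (R : realType) (a b : R) (g : R -> R) :=
  forall x y t, in_itv a b x -> in_itv a b y -> x != y -> 0 < t -> t < 1 ->
    g (t * x + (1 - t) * y) < t * g x + (1 - t) * g y.

From Pilot Require Import Defs.
From mathcomp Require Import all_boot all_order all_algebra.
From mathcomp Require Import reals.
From mathcomp Require Import zify ring lra.
Import Order.TTheory GRing.Theory Num.Theory.
Set Implicit Arguments. Unset Strict Implicit. Unset Printing Implicit Defensive.

(* Write A = {a_0 < ... < a_(m-1)} and let gap k i = d*(a_i, a_(i+k)), indices mod m.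
   Counting each unordered pair once from each endpoint, by its span k,
     2 E_g(A) = \sum_(0 < k < m) \sum_i h (gap k i)   with   h d = g (min d (n - d)),
   and for each k the gaps of span k add up to k n.  The hypotheses on g make h strictly
   convex on [1, n - 1], so by the discrete Jensen inequality each inner sum is at least
   its value for gaps taking only the values floor(kn/m) and floor(kn/m) + 1, with
   equality iff the gaps do so.  This lower bound depends on m only and is attained by
   {floor(in/m) | i < m}; hence A is a minimizer iff for every k its gaps of span k take
   only these two values, which is maximal evenness. *)

Lemma cdistE n (u v : 'I_n) :
  cdist u v = if (u <= v)%N then (v - u)%N else (v + n - u)%N.
Proof.
rewrite /cdist; have := ltn_ord u; have := ltn_ord v; case: (leqP u v) => uv vn un.
  have -> : (v + (n - u) = (v - u) + n)%N by lia.
  by rewrite modnDr modn_small; lia.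
by rewrite modn_small; lia.
Qed.

Lemma cdist_lt n (u v : 'I_n) : (cdist u v < n)%N.
Proof. by rewrite cdistE; have := ltn_ord u; have := ltn_ord v; case: (leqP u v); lia. Qed.

Lemma cdist_gt0 n (u v : 'I_n) : u != v -> (0 < cdist u v)%N.
Proof.
move=> uv; have : (u : nat) != v by [].
by rewrite cdistE; have := ltn_ord u; have := ltn_ord v; case: (leqP u v); lia.
Qed.

Lemma cdist_swap n (u v : 'I_n) : u != v -> cdist v u = (n - cdist u v)%N.
Proof.
move=> uv; have : (u : nat) != v by [].
rewrite !cdistE; have := ltn_ord u; have := ltn_ord v.
by case: (leqP u v); case: (leqP v u); lia.
Qed.

Lemma big_rot_mod (R : Type) (idx : R) (op : Monoid.com_law idx) m i (F : nat -> R) :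
  (i < m)%N -> \big[op/idx]_(k < m) F ((i + k) %% m)%N = \big[op/idx]_(k < m) F k.
Proof.
case: m i => [//|m] i im.
by rewrite [RHS](reindex_inj (addrI (Ordinal im : 'I_m.+1))).
Qed.

(** * Increasing enumeration of a subset *)

Section Enumeration.
Variables (n : nat) (A : {set 'I_n}) (x0 : 'I_n).
Local Notation m := #|A|.
Local Notation rk := (rank_in A).

Lemma rank_in_lt u : u \in A -> (rk u < m)%N.
Proof.
move=> uA; apply/proper_card/properP; split.
  by apply/subsetP => x; rewrite inE => /andP[].
by exists u; rewrite // inE ltnn andbF.
Qed.

Lemma rank_in_ltn u v : u \in A -> v \in A -> (u < v)%N -> (rk u < rk v)%N.
Proof.
move=> uA vA uv; apply/proper_card/properP; split.
  by apply/subsetP => x; rewrite !inE => /andP[-> /= /ltn_trans]; apply.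
by exists u; rewrite !inE ?uA ?uv // ltnn andbF.
Qed.

Lemma ltn_rank_in u v : u \in A -> v \in A -> (rk u < rk v)%N = (u < v)%N.
Proof.
move=> uA vA; case: (ltngtP u v) => [uv|vu|uv].
- exact: rank_in_ltn.
- by apply/negbTE; rewrite -leqNgt; apply/ltnW/rank_in_ltn.
- by rewrite (val_inj uv) ltnn.
Qed.

Lemma rank_in_inj : {in A &, injective rk}.
Proof.
move=> u v uA vA ruv; apply/val_inj.
by case: (ltngtP u v) => // uv; move: uv; rewrite -ltn_rank_in // ruv ltnn.
Qed.

Lemma rank_in_onto j : (j < m)%N -> exists2 u, u \in A & rk u = j.
Proof.
move=> jm; have [|||_ /(_ j)] := @uniq_min_size _ (map rk (enum A)) (iota 0 m).
- by rewrite map_inj_in_uniq ?enum_uniq // => u v; rewrite !mem_enum; apply: rank_in_inj.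
- by move=> _ /mapP[u uA ->]; rewrite mem_iota rank_in_lt // -mem_enum.
- by rewrite size_map size_iota -cardE.
by rewrite mem_iota jm => /mapP[u]; rewrite mem_enum; exists u.
Qed.

(* The [j]-th smallest element of [A]; the default [x0] only appears for [j >= #|A|]. *)
Definition nth_in j := odflt x0 [pick u in A | rk u == j].

Lemma nth_inP j : (j < m)%N -> nth_in j \in A /\ rk (nth_in j) = j.
Proof.
move=> jm; rewrite /nth_in; case: pickP => [u /andP[uA /eqP ->] //| none].
by have [u uA ruj] := rank_in_onto jm; have := none u; rewrite uA ruj eqxx.
Qed.

Lemma mem_nth_in j : (j < m)%N -> nth_in j \in A.
Proof. by case/nth_inP. Qed.

Lemma rank_nth_in j : (j < m)%N -> rk (nth_in j) = j.
Proof. by case/nth_inP. Qed.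

Lemma nth_in_rank u : u \in A -> nth_in (rk u) = u.
Proof. by move=> uA; apply: rank_in_inj; rewrite ?mem_nth_in ?rank_nth_in ?rank_in_lt. Qed.

Lemma nth_in_inj i j : (i < m)%N -> (j < m)%N -> nth_in i = nth_in j -> i = j.
Proof. by move=> im jm /(congr1 rk); rewrite !rank_nth_in. Qed.

Lemma ltn_nth_in i j : (i < m)%N -> (j < m)%N -> (nth_in i < nth_in j)%N = (i < j)%N.
Proof. by move=> im jm; rewrite -ltn_rank_in ?mem_nth_in ?rank_nth_in. Qed.

Lemma big_nth_in (R : Type) (idx : R) (op : Monoid.com_law idx) (F : 'I_n -> R) :
  \big[op/idx]_(u in A) F u = \big[op/idx]_(i < m) F (nth_in i).
Proof.
have memA u : (u \in A) = (u \in [set nth_in i | i : 'I_m]).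
  apply/idP/imsetP => [uA | [i _ ->]]; last exact: mem_nth_in.
  by exists (Ordinal (rank_in_lt uA)); rewrite ?nth_in_rank.
rewrite (eq_bigl _ _ memA) big_imset => [//|i j _ _ /nth_in_inj ij].
exact/val_inj/ij.
Qed.

End Enumeration.

(** * Gaps of a given span *)

Lemma modn_add_lt m i k : (i < m)%N -> (k < m)%N ->
  ((i + k) %% m = if (i + k < m)%N then i + k else i + k - m)%N.
Proof.
move=> im km; case: ltnP => ikm; first by rewrite modn_small.
by rewrite -{1}(subnK ikm) modnDr modn_small; lia.
Qed.

Lemma modn_add_neq m i k : (0 < k < m)%N -> (i < m)%N -> ((i + k) %% m)%N != i.
Proof. by move=> /andP[k0 km] im; rewrite modn_add_lt //; case: ltnP; lia. Qed.

Section Gaps.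
Variables (n : nat) (A : {set 'I_n}) (x0 : 'I_n).
Local Notation m := #|A|.
Local Notation a := (nth_in A x0).

Definition gap k i := cdist (a i) (a ((i + k) %% m)).

Lemma nth_in_add_neq k i : (0 < k < m)%N -> (i < m)%N -> a i != a ((i + k) %% m).
Proof.
move=> km im; apply: contra (modn_add_neq km im) => /eqP aik.
by rewrite -(nth_in_inj im _ aik) // ltn_pmod //; case/andP: km => _; apply: leq_ltn_trans.
Qed.

Lemma gap_add k i : (k < m)%N -> (i < m)%N ->
  (gap k i + a i = a ((i + k) %% m) + (if (m <= i + k)%N then n else 0))%N.
Proof.
move=> km im; rewrite /gap cdistE modn_add_lt //; have := ltn_ord (a i).
case: (ltnP (i + k) m) => ikm.
  have : (a i <= a (i + k))%N.
    by case: (posnP k) => [->|k0]; rewrite ?addn0 // ltnW // ltn_nth_in //; lia.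
  by move=> le; rewrite le; lia.
have lt : (a (i + k - m) < a i)%N by rewrite ltn_nth_in //; lia.
by rewrite (leqNgt (a i)) lt /=; lia.
Qed.

Lemma sum_gap k : (k < m)%N -> (\sum_(i < m) gap k i = k * n)%N.
Proof.
move=> km; apply: (@addIn (\sum_(i < m) a i)).
rewrite -big_split /= (eq_bigr _ (fun i _ => gap_add km (ltn_ord i))) big_split /=.
rewrite [RHS]addnC -(big_rot_mod _ (fun j => (a j : nat)) km); congr (_ + _).
  by apply: eq_bigr => i _; rewrite addnC.
rewrite -(big_mkord xpredT (fun i => if (m <= i + k)%N then n else 0%N)).
rewrite (@big_cat_nat _ _ _ (m - k)) ?leq_subr //= big_nat_cond big1 => [|i]; last first.
  by case/andP=> /andP[_ ?] _; case: leqP => //; lia.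
rewrite add0n big_nat_cond (eq_bigr (fun _ => n)) => [|i]; last first.
  by case/andP=> /andP[? _] _; case: leqP => //; lia.
by rewrite -big_nat_cond sum_nat_const_nat subKn // ltnW.
Qed.

Lemma gap_gt0 k i : (0 < k < m)%N -> (i < m)%N -> (0 < gap k i)%N.
Proof. by move=> km im; apply/cdist_gt0/nth_in_add_neq. Qed.

Lemma gap_lt k i : (gap k i < n)%N.
Proof. exact: cdist_lt. Qed.

Lemma span_in_add k i : (0 < k < m)%N -> (i < m)%N -> span_in A (a i) (a ((i + k) %% m)) = k.
Proof.
move=> /andP[k0 km] im; have m0 : (0 < m)%N by lia.
rewrite /span_in !rank_nth_in ?ltn_pmod // modnDml.
have -> : (i + k + (m - i) = k + m)%N by lia.
by rewrite modnDr modn_small //; case: eqP => //; lia.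
Qed.

Lemma span_in_eq u v k : u \in A -> v \in A -> (k < m)%N ->
  span_in A u v = k -> v = a ((rank_in A u + k) %% m).
Proof.
move=> uA vA km; have ui := rank_in_lt uA; have vj := rank_in_lt vA.
rewrite /span_in; case: eqP => [_ | _ <-]; first by lia.
rewrite modnDmr addnCA subnKC ?(ltnW ui) // modnDr modn_small //.
by rewrite nth_in_rank.
Qed.

Lemma sigma_valsP k d : (0 < k < m)%N ->
  sigma_vals A k d <-> exists2 i, (i < m)%N & gap k i = d.
Proof.
move=> km; have km' : (k < m)%N by case/andP: km.
have m0 : (0 < m)%N by apply: leq_ltn_trans km'.
split.
  case/existsP => u /andP[uA /existsP[v /andP[vA /and3P[_ /eqP spk /eqP <-]]]].
  exists (rank_in A u); first exact: rank_in_lt.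
  by rewrite /gap nth_in_rank // -(span_in_eq uA vA km' spk).
case=> i im <-; apply/existsP; exists (a i); rewrite mem_nth_in //=.
apply/existsP; exists (a ((i + k) %% m)); rewrite mem_nth_in ?ltn_pmod //=.
by rewrite nth_in_add_neq // span_in_add // eqxx /gap eqxx.
Qed.

End Gaps.

Lemma sum_eq_const (I : finType) (d : I -> nat) c :
  (forall i, (d i <= c)%N) -> (\sum_i d i = #|I| * c)%N -> forall i, d i = c.
Proof.
move=> dc; rewrite -sum_nat_const => /esym/eqP.
rewrite eq_sym (leqif_sum (fun i _ => leqif_eq (dc i))) => /forall_inP cd i.
exact/eqP/cd.
Qed.

Lemma divn_sum_eq (I : finType) (d : I -> nat) c :
  (forall i, (c <= d i <= c.+1)%N) -> (exists i, d i = c) -> ((\sum_i d i) %/ #|I| = c)%N.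
Proof.
move=> dc [i0 di0]; have I0 : (0 < #|I|)%N by apply/card_gt0P; exists i0.
apply/eqP; rewrite eqn_leq -ltnS ltn_divLR // leq_divRL // !(mulnC _ #|I|) -!sum_nat_const.
apply/andP; split; last by apply: leq_sum => i _; case/andP: (dc i).
rewrite (bigD1 i0) //= [X in (_ < X)%N](bigD1 i0) //= di0 addSn ltnS leq_add2l.
by apply: leq_sum => i _; case/andP: (dc i).
Qed.

Lemma two_consecutive_values (P : pred nat) q : (forall d, P d -> q <= d <= q.+1)%N ->
  (exists c, forall d, P d -> d = c) \/
  (exists c, (forall d, P d -> d = c \/ d = c.+1) /\ P c /\ P c.+1).
Proof.
move=> Pq; have Pqq d : P d -> d = q \/ d = q.+1 by move/Pq; lia.
case Pq0: (P q); case Pq1: (P q.+1).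
- by right; exists q.
- by left; exists q => d Pd; case: (Pqq d Pd) => // dq; rewrite -dq Pd in Pq1.
- by left; exists q.+1 => d Pd; case: (Pqq d Pd) => // dq; rewrite -dq Pd in Pq0.
by left; exists q => d Pd; case: (Pqq d Pd) => dq; [rewrite -dq Pd in Pq0 | rewrite -dq Pd in Pq1].
Qed.

Section Balanced.
Variables (n : nat) (A : {set 'I_n}) (x0 : 'I_n).
Local Notation m := #|A|.

Definition balanced := [forall k : 'I_m, (0 < k) ==>
  [forall i : 'I_m, (k * n) %/ m <= gap A x0 k i <= ((k * n) %/ m).+1]].

Lemma balancedP : reflect (maximally_even A) balanced.
Proof.
apply: (iffP forall_inP) => [bal k /andP[k1 km] | me k k0].
  have km' : (0 < k < m)%N by rewrite k1; lia.
  have kltm : (k < m)%N by lia.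
  apply: (two_consecutive_values (q := (k * n) %/ m)) => d /(sigma_valsP x0 d km') [i im <-].
  by have /forallP/(_ (Ordinal im)) := bal (Ordinal kltm) k1.
have km : (0 < k < m)%N by rewrite k0 ltn_ord.
have gap_val (i : 'I_m) : sigma_vals A k (gap A x0 k i) by apply/(sigma_valsP x0 _ km); exists i.
have [c [gc [i0 gi0]]] : exists c,
    (forall i : 'I_m, c <= gap A x0 k i <= c.+1) /\ exists i : 'I_m, gap A x0 k i = c.
  have hk : (1 <= k <= m - 1)%N by rewrite k0; lia.
  case: (me k hk) => [[c Pc] | [c [Pc [Pc0 _]]]]; exists c.
    by split => [i | ]; [rewrite (Pc _ (gap_val i)) leqnn leqnSn | exists k; apply: Pc].
  split => [i | ]; first by case: (Pc _ (gap_val i)) => ->; rewrite leqnn leqnSn.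
  by case/(sigma_valsP x0 _ km): Pc0 => i im gi; exists (Ordinal im).
have := divn_sum_eq gc (ex_intro _ i0 gi0); rewrite card_ord sum_gap ?ltn_ord // => ->.
exact/forallP.
Qed.

End Balanced.

(** * A discrete Jensen inequality *)

Section DiscreteJensen.
Variables (R : realFieldType) (h : nat -> R) (lo hi : nat).
Local Open Scope ring_scope.
Hypothesis h_conv : forall x, (lo < x < hi)%N -> h x *+ 2 < h x.-1 + h x.+1.

Definition slope x := h x.+1 - h x.

Lemma slope_lt x y : (lo <= x)%N -> (x < y)%N -> (y < hi)%N -> slope x < slope y.
Proof.
move=> lx; elim: y => // y IH; rewrite ltnS leq_eqVlt => /orP[/eqP<- | xy] yhi.
  by have := h_conv (x := x.+1); rewrite /slope /= mulr2n ltnS lx yhi; lra.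
apply: lt_trans (IH xy (ltnW yhi)) _.
have := h_conv (x := y.+1); rewrite /slope /= mulr2n yhi andbT.
by move=> /(_ (ltnW (leq_ltn_trans lx xy))); lra.
Qed.

Definition excess c x := h x - h c - slope c * (x%:R - c%:R).

Lemma excessS c x : excess c x.+1 = excess c x + (slope x - slope c).
Proof. by rewrite /excess /slope -addn1 natrD; ring. Qed.

Lemma excess_id c : excess c c = 0.
Proof. by rewrite /excess; ring. Qed.

Lemma excess_idS c : excess c c.+1 = 0.
Proof. by rewrite excessS excess_id; ring. Qed.

Lemma excess_gt0_below x d : (lo <= x)%N -> (x + d.+1 < hi)%N -> 0 < excess (x + d.+1) x.
Proof.
elim: d x => [|d IH] x lx xdh.
  rewrite addn1 in xdh *; have := excessS x.+1 x.
  by have := slope_lt lx (ltnSn x) xdh; rewrite excess_id; lra.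
have xc : (x < x + d.+2)%N by rewrite -addSnnS leq_addr.
have := excessS (x + d.+2) x; have := slope_lt lx xc xdh.
have := IH x.+1 (leqW lx); rewrite addSnnS => /(_ xdh); lra.
Qed.

Lemma excess_gt0_above c d : (lo <= c)%N -> (c + d.+2 <= hi)%N -> 0 < excess c (c + d.+2).
Proof.
move=> lc; elim: d => [|d IH] cdh; rewrite addnS excessS.
  by rewrite addn1 excess_idS add0r subr_gt0; apply: slope_lt; lia.
by apply: addr_gt0; [apply: IH | rewrite subr_gt0; apply: slope_lt]; lia.
Qed.

Lemma excess_leif c x : (lo <= c)%N -> (c < hi)%N -> (lo <= x <= hi)%N ->
  0 <= excess c x ?= iff (c <= x <= c.+1)%N.
Proof.
move=> lc ch /andP[lx xh]; apply/leifP; case: ifPn => [/andP[cx xc] | out].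
  have [->|->] : x = c \/ x = c.+1 by lia.
    by rewrite excess_id.
  by rewrite excess_idS.
case: (ltnP x c) => [xc | cx].
  have -> : c = x + (c - x.+1).+1 by lia.
  apply: excess_gt0_below => //; lia.
have -> : x = c + (x - c.+2).+2 by move: out; rewrite cx /=; lia.
apply: excess_gt0_above => //; lia.
Qed.

(* The value of [\sum_i h (d i)] for [m] numbers [d i] with sum [S] that are as equal as
   possible: [S %% m] of them equal [S %/ m + 1] and the others [S %/ m]. *)
Definition split_sum m S := h (S %/ m) *+ (m - S %% m) + h (S %/ m).+1 *+ (S %% m).

Section Sums.
Variables (I : finType) (d : I -> nat).

Lemma sum_excess c : \sum_i h (d i) =
  \sum_i excess c (d i) + h c *+ #|I| + slope c * ((\sum_i d i)%N%:R - c%:R *+ #|I|).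
Proof. by rewrite /excess !sumrB -mulr_sumr sumrB natr_sum !sumr_const; ring. Qed.

Hypothesis d_range : forall i, (lo <= d i <= hi)%N.
Hypothesis I0 : (0 < #|I|)%N.
Local Notation m := #|I|.
Local Notation S := (\sum_i d i)%N.

Lemma sum_div_range : (lo <= S %/ m <= hi)%N.
Proof.
have [loS Shi] : (m * lo <= S /\ S <= m * hi)%N.
  by rewrite -!sum_nat_const; split; apply: leq_sum => i _; case/andP: (d_range i).
by rewrite leq_divRL // mulnC loS (leq_trans (leq_div2r m Shi)) // mulKn.
Qed.

Lemma split_sum_excess : split_sum m S =
  h (S %/ m) *+ m + slope (S %/ m) * (S%:R - (S %/ m)%:R *+ m).
Proof.
have -> : (S%:R : R) = (S %/ m)%:R *+ m + (S %% m)%:R.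
  by rewrite {1}(divn_eq S m) natrD natrM mulr_natr.
rewrite /split_sum mulrnBr ?(ltnW (ltn_pmod S I0)) // /slope.
by move: (S %/ m)%N (S %% m)%N => q r; move: #|I| => k; ring.
Qed.

Lemma split_sum_leif :
  split_sum m S <= \sum_i h (d i) ?= iff [forall i, S %/ m <= d i <= (S %/ m).+1]%N.
Proof.
have /andP[lq qh] := sum_div_range; case: (ltnP (S %/ m) hi) => [qlt | qge].
  rewrite (sum_excess (S %/ m)) -addrA -split_sum_excess.
  have := leifD (leif_0_sum (P := xpredT) (fun i _ => excess_leif lq qlt (d_range i)))
    (leif_eq (lexx (split_sum m S))).
  by rewrite add0r eqxx andbT.
have Shi : S = (m * hi)%N.
  apply/eqP; rewrite eqn_leq {2}mulnC -leq_divRL // qge andbT -sum_nat_const.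
  by apply: leq_sum => i _; case/andP: (d_range i).
have d_hi := sum_eq_const (fun i => proj2 (andP (d_range i))) Shi.
rewrite (eq_bigr _ (fun i _ => congr1 h (d_hi i))) sumr_const /split_sum Shi.
rewrite mulKn // modnMr subn0 mulr0n addr0; apply/leif_refl/forallP => i.
by rewrite d_hi leqnn leqnSn.
Qed.

End Sums.

End DiscreteJensen.

(** * The energy as a sum over gaps *)

Local Open Scope ring_scope.

Section CyclicEnergy.
Variables (R : realType) (n : nat) (g : R -> R).

Definition cyc_interaction d := g (minn d (n - d))%:R.

Lemma cycdist_interaction (u v : 'I_n) : u != v -> g (cycdist u v)%:R = cyc_interaction (cdist u v).
Proof. by move=> uv; rewrite /cycdist (cdist_swap uv). Qed.

Variables (A : {set 'I_n}) (x0 : 'I_n).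
Local Notation m := #|A|.
Local Notation a := (nth_in A x0).
Let G i j := g (cycdist (a i) (a j))%:R.

Lemma energy_nth_in : energy g A = \sum_(i < m) \sum_(j < m | (i < j)%N) G i j.
Proof.
rewrite /energy (big_nth_in _ x0); apply: eq_bigr => i _.
rewrite big_mkcondr (big_nth_in _ x0) [RHS]big_mkcond; apply: eq_bigr => j _.
by rewrite ltn_nth_in.
Qed.

Lemma energy_sym : energy g A *+ 2 = \sum_(i < m) \sum_(j < m | i != j) G i j.
Proof.
have Gsym i j : G i j = G j i by rewrite /G /cycdist minnC.
have swap : \sum_(i < m) \sum_(j < m | (i < j)%N) G i j =
          \sum_(i < m) \sum_(j < m | (j < i)%N) G i j.
  rewrite (eq_bigr _ (fun i _ => big_mkcond _ _)) exchange_big; apply: eq_bigr => i _.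
  by rewrite [RHS]big_mkcond; apply: eq_bigr => j _; rewrite Gsym.
rewrite energy_nth_in mulr2n {2}swap -big_split; apply: eq_bigr => i _ /=.
rewrite big_mkcond [X in _ + X]big_mkcond [RHS]big_mkcond -big_split; apply: eq_bigr => j _ /=.
by case: (ltngtP i j) => [ij|ji|/val_inj->]; rewrite ?eqxx ?addr0 ?add0r // neq_ltn ?ij ?ji ?orbT.
Qed.

Lemma sum_neq_rot i : (i < m)%N ->
  \sum_(j < m | i != j) G i j = \sum_(k < m | (0 < k)%N) G i ((i + k) %% m)%N.
Proof.
move=> im; rewrite big_mkcond -(big_rot_mod _ (fun j => if i != j then G i j else 0) im).
rewrite [RHS]big_mkcond; apply: eq_bigr => k _ /=.
case: (posnP k) => [-> | k0]; first by rewrite addn0 modn_small // eqxx.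
by rewrite eq_sym modn_add_neq // k0 ltn_ord.
Qed.

Lemma energy_gaps : energy g A *+ 2 =
  \sum_(k < m | (0 < k)%N) \sum_(i < m) cyc_interaction (gap A x0 k i).
Proof.
rewrite energy_sym (eq_bigr _ (fun i _ => sum_neq_rot (ltn_ord i))) exchange_big.
apply: eq_bigr => k k0; apply: eq_bigr => i _.
by rewrite /G cycdist_interaction // nth_in_add_neq // k0 ltn_ord.
Qed.

End CyclicEnergy.

Section Convexity.
Variables (R : realType) (n : nat) (g : R -> R).
Hypothesis g_decr : strictly_decreasing_on 1%:R (n./2)%:R g.
Hypothesis g_conv : strictly_convex_on 1%:R (n./2)%:R g.
Local Notation h := (cyc_interaction n g).

Lemma in_itv_nat a : (1 <= a <= n./2)%N -> Defs.in_itv 1%:R (n./2)%:R (a%:R : R).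
Proof. by rewrite /Defs.in_itv !ler_nat. Qed.

Lemma g_nat_lt a b : (1 <= a)%N -> (a < b <= n./2)%N -> g b%:R < g a%:R.
Proof.
move=> a1 /andP[ab bn]; apply: g_decr; rewrite ?ltr_nat // in_itv_nat //; lia.
Qed.

Lemma g_nat_midpoint a : (1 <= a)%N -> (a.+2 <= n./2)%N -> g a.+1%:R *+ 2 < g a%:R + g a.+2%:R.
Proof.
move=> a1 an; have half_gt0 : (0 : R) < 2^-1 by rewrite invr_gt0.
have half_lt1 : (2^-1 : R) < 1 by rewrite invf_lt1 // ltr1n.
have := g_conv (x := a%:R) (y := a.+2%:R) (t := 2^-1).
have an' : (a <= n./2)%N by lia.
rewrite !in_itv_nat ?a1 ?an ?an' ?eqr_nat ?ltn_eqF // => /(_ isT isT isT half_gt0 half_lt1).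
have -> : 2^-1 * a%:R + (1 - 2^-1) * a.+2%:R = a.+1%:R :> R.
  by rewrite -!natr1; field.
have -> : 2^-1 * g a%:R + (1 - 2^-1) * g a.+2%:R = (g a%:R + g a.+2%:R) / 2 :> R by field.
by rewrite ltr_pdivlMr // mulr_natr.
Qed.

Lemma cyc_interaction_sym x : (x <= n)%N -> h (n - x) = h x.
Proof. by move=> xn; rewrite /cyc_interaction subKn // minnC. Qed.

Lemma cyc_interaction_conv x : (1 < x < n.-1)%N -> h x *+ 2 < h x.-1 + h x.+1.
Proof.
wlog x_le : x / (x.*2 <= n)%N => [wlog_le xr | /andP[x1 xn]].
  case: (leqP x.*2 n) => [x_le|x_gt]; first exact: wlog_le.
  have := wlog_le (n - x)%N ltac:(lia) ltac:(lia).
  have -> : ((n - x).-1 = n - x.+1)%N by lia.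
  have -> : ((n - x).+1 = n - x.-1)%N by lia.
  by rewrite addrC !cyc_interaction_sym //; lia.
rewrite /cyc_interaction.
have -> : (minn x.-1 (n - x.-1) = x.-1)%N by lia.
have -> : (minn x (n - x) = x)%N by lia.
have -> : (minn x.+1 (n - x.+1) = if x.*2 + 2 <= n then x.+1 else n - x.+1)%N.
  by case: ifP; lia.
(* Near n/2 the profile h turns back; there g being decreasing does the job. *)
case: ifP => far.
  by have := g_nat_midpoint (a := x.-1); rewrite !prednK //; lia.
have lt : g x%:R < g x.-1%:R by apply: g_nat_lt; lia.
have ge : g x%:R <= g (n - x.+1)%N%:R.
  have [-> // | ->] : (n - x.+1 = x \/ n - x.+1 = x.-1)%N by lia.
  exact: ltW.
rewrite mulr2n; lra.
Qed.

End Convexity.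

(** * A balanced set of every size *)

Lemma card_ord_lt m i : (i <= m)%N -> #|[set j : 'I_m | (j < i)%N]| = i.
Proof.
move=> im; have -> : [set j : 'I_m | (j < i)%N] = [set widen_ord im j | j : 'I_i].
  apply/setP => j; rewrite inE; apply/idP/imsetP => [ji | [j' _ ->]]; last exact: ltn_ord j'.
  by exists (Ordinal ji) => //; apply: val_inj.
by rewrite card_imset ?card_ord // => j j' [/ord_inj].
Qed.

Section IncreasingImage.
Variables (n m : nat) (f : nat -> nat) (x0 : 'I_n).
Hypothesis f_incr : forall i j, (i < j)%N -> (f i < f j)%N.
Hypothesis f_lt : forall i, (i < m)%N -> (f i < n)%N.

Let u i : 'I_n := insubd x0 (f i).
Definition image_set := [set u i | i : 'I_m].

Let val_u i : (i < m)%N -> (u i : nat) = f i.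
Proof. by move=> im; rewrite val_insubd f_lt. Qed.

Let ltn_u (i j : 'I_m) : (u i < u j)%N = (i < j)%N.
Proof.
rewrite !val_u //; case: (ltngtP i j) => [/f_incr -> // | /f_incr ji | /ord_inj -> ].
  by rewrite ltnNge ltnW.
by rewrite ltnn.
Qed.

Let u_inj : injective (fun i : 'I_m => u i).
Proof.
move=> i j uij; case: (ltngtP i j) => [|| /ord_inj //]; by rewrite -ltn_u uij ltnn.
Qed.

Lemma card_image_set : #|image_set| = m.
Proof. by rewrite card_imset // card_ord. Qed.

Lemma rank_image_set (i : 'I_m) : rank_in image_set (u i) = i.
Proof.
rewrite /rank_in.
have -> : [set b in image_set | (b < u i)%N] = [set u j | j : 'I_m in [set j : 'I_m | (j < i)%N]].
  apply/setP => b; rewrite !inE; apply/andP/imsetP => [[/imsetP[j _ ->]] | [j]].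
    by rewrite ltn_u => ji; exists j; rewrite ?inE.
  by rewrite inE => ji ->; split; [exact: imset_f | rewrite ltn_u].
by rewrite card_imset ?card_ord_lt // ltnW.
Qed.

Lemma nth_in_image_set (i : 'I_m) : nth_in image_set x0 i = f i :> nat.
Proof.
rewrite -{1}(rank_image_set i) nth_in_rank; first exact: val_u (ltn_ord i).
exact: imset_f.
Qed.

End IncreasingImage.

Section FloorSet.
Variables (n m : nat) (x0 : 'I_n).
Hypotheses (m_gt0 : (0 < m)%N) (m_le : (m <= n)%N).

Let f i := (i * n %/ m)%N.

Let f_incr i j : (i < j)%N -> (f i < f j)%N.
Proof.
move=> ij; rewrite /f -addn1 -[1%N in X in (X <= _)%N](mulnK 1 m_gt0) -divnDMl //.
by apply: leq_div2r; rewrite mul1n; nia.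
Qed.

Let f_lt i : (i < m)%N -> (f i < n)%N.
Proof. by move=> im; rewrite /f ltn_divLR // mulnC ltn_pmul2l //; lia. Qed.

Let B := image_set m f x0.

Let card_B : #|B| = m.
Proof. exact: card_image_set. Qed.

Lemma gap_floor_set k i : (k < m)%N -> (i < m)%N -> (gap B x0 k i + f i = f (i + k))%N.
Proof.
move=> km im; have fB j : (j < m)%N -> nth_in B x0 j = f j :> nat.
  by move=> jm; apply: (nth_in_image_set x0 f_incr f_lt (Ordinal jm)).
have := @gap_add _ B x0 k i; rewrite card_B => /(_ km im).
rewrite !fB ?ltn_pmod // => ->; case: ltnP => ikm; first by rewrite modn_small ?addn0.
rewrite modn_add_lt // ltnNge ikm /= /f -divnDMl //; congr (_ %/ _)%N; nia.
Qed.

Lemma floor_set_balanced : #|B| = m /\ balanced B x0.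
Proof.
split=> //; suff gapB k i : (k < #|B|)%N -> (i < #|B|)%N ->
    ((k * n) %/ #|B| <= gap B x0 k i <= ((k * n) %/ #|B|).+1)%N.
  by apply/forall_inP => k _; apply/forallP => i; apply: gapB.
rewrite card_B => km im; have := gap_floor_set km im; rewrite /f mulnDl divnD //.
by have := leq_b1 (m <= (i * n) %% m + (k * n) %% m)%N; lia.
Qed.

End FloorSet.

Lemma exists_balanced n m (x0 : 'I_n) : (m <= n)%N -> exists B : {set 'I_n}, #|B| = m /\ balanced B x0.
Proof.
move=> mn; case: (posnP m) => [-> | m0].
  exists set0; split; first exact: cards0.
  by apply/forallP => -[k kB]; exfalso; rewrite cards0 in kB.
by exists (image_set m (fun i => i * n %/ m)%N x0); apply: floor_set_balanced.
Qed.

Section Minimizers.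
Variables (R : realType) (n : nat) (g : R -> R).
Hypothesis g_decr : strictly_decreasing_on 1%:R (n./2)%:R g.
Hypothesis g_conv : strictly_convex_on 1%:R (n./2)%:R g.

Definition energy_lb m := \sum_(k < m | (0 < k)%N) split_sum (cyc_interaction n g) m (k * n).

Lemma energy_lb_leif (A : {set 'I_n}) x0 :
  energy_lb #|A| <= energy g A *+ 2 ?= iff balanced A x0.
Proof.
rewrite (energy_gaps _ _ x0); apply: leif_sum => k k0.
have km : (0 < k < #|A|)%N by rewrite k0 ltn_ord.
have d_range (i : 'I_#|A|) : (1 <= gap A x0 k i <= n.-1)%N.
  by have := gap_gt0 x0 km (ltn_ord i); have := gap_lt A x0 k i; lia.
have := split_sum_leif (cyc_interaction_conv g_decr g_conv) d_range.
rewrite card_ord sum_gap ?ltn_ord //; apply; lia.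
Qed.

End Minimizers.

Theorem mainTheorem5 (R : realType) (n : nat) (g : R -> R) (A : {set 'I_n}) :
  (3 <= n)%N ->
  strictly_decreasing_on 1%:R (n./2)%:R g ->
  strictly_convex_on 1%:R (n./2)%:R g ->
  is_minimizer g A <-> maximally_even A.
Proof.
move=> n3 g_decr g_conv; have x0 : 'I_n := Ordinal (leq_trans (isT : 0 < 3)%N n3).
have lb_leif := energy_lb_leif g_decr g_conv.
have [B [cardB balB]] : exists B : {set 'I_n}, #|B| = #|A| /\ balanced B x0.
  by apply: exists_balanced; rewrite -[n in (_ <= n)%N]card_ord max_card.
have EB : energy g B *+ 2 = energy_lb n g #|A|.
  by apply/esym/eqP; rewrite -cardB (lb_leif B x0).2.
split => [minA | /(balancedP _ x0) balA C cardC].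
  apply/(balancedP _ x0); rewrite -(lb_leif A x0).2 eq_le (lb_leif A x0).1 -EB /=.
  by rewrite ler_pMn2r // minA.
have /eqP EA : energy_lb n g #|A| == energy g A *+ 2 by rewrite (lb_leif A x0).2.
rewrite -(ler_pMn2r (n := 2)) // -EA.
by rewrite -cardC (lb_leif C x0).1.
Qed.
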